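(* Let $\varepsilon$ be a real random variable with distribution $\mu_\varepsilon$, and suppose there are $z_0\in\mathbb{R}$ and $t>0$ such that $P(\varepsilon\in\{z_0+tz:z\in\mathbb{N}_0\})=1$ and $F_\varepsilon\{z_0\}>0$. Let $\lambda_{z_0}:=(F_\varepsilon\{z_0\})^{-1}$ and $\ddot u_{\varepsilon,+}(z):=\delta_{z,0}-\lambda_{z_0}F_\varepsilon\{z_0+tz\}$ for $z\in\mathbb{Z}$. Let $A\in\mathcal{B}(\mathbb{R})$ and $m_{t,A}:=\max\{a: a\in\mathbb{Z}\cap t^{-1}A\}$ (with $m_{t,A}:=-\infty$ if $\mathbb{Z}\cap t^{-1}A=\emptyset$), and suppose $m_{t,A}<\infty$. Then $$\sup_{m\in\mathbb{N}_0}|\Pi\{\delta_{\{-z_0\}}\}|(A,m)<\infty,$$ and for each fixed $m_0\in\mathbb{N}_0$ with $m_0\ge m_{t,A}$, $$\lim_{m\to\infty}\Pi\{\delta_{\{-z_0\}}\}(A,m)=\lambda_{z_0}\,\Pi\{\lambda_{z_0}\delta_{\{-z_0\}}\}(A,m_0)=\lambda_{z_0}\sum_{z=0}^\infty\gamma\{\ddot u_{\varepsilon,+}\}(z)\,\delta_{\{tz\}}(A).$$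
   Context: $F_\varepsilon\{x\}:=P(\varepsilon=x)$. $\delta_{\{x\}}$ is the Dirac measure at $x$ and $\delta_{z,0}=1$ if $z=0$, else $0$. For finite complex Borel measures $\mu,\nu$ on $\mathbb{R}$, $(\mu*\nu)(B):=\int\int\mathbf 1_B(x+y)\nu(dx)\mu(dy)$; $\mu^{*0}:=\delta_{\{0\}}$, $\mu^{*j}:=\mu*\mu^{*(j-1)}$. For a finite complex Borel measure $\eta$ on $\mathbb{R}$, set $\pi_{\eta*\mu_\varepsilon}:=\delta_{\{0\}}-\eta*\mu_\varepsilon$ and $\Pi\{\eta\}(B,m):=\sum_{\ell=0}^m\pi_{\eta*\mu_\varepsilon}^{*\ell}(B)$ for $B\in\mathcal{B}(\mathbb{R})$, $m\in\mathbb{N}_0$; $|\Pi\{\eta\}|(A,m)$ denotes the total variation on $A$ of the complex measure $\Pi\{\eta\}(\cdot,m)$. Discrete convolution powers: $\ddot u^{*0}(z):=\delta_{z,0}$, $\ddot u^{*j}(z):=\sum_{y\in\mathbb{Z}}\ddot u(z-y)\ddot u^{*(j-1)}(y)$; $\gamma\{\ddot u\}(z):=\sum_{j=0}^{z}\ddot u^{*j}(z)$ for $z\in\mathbb{Z}$ (empty sum $=0$). *)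

From HB Require Import structures.
From mathcomp Require Import all_boot all_order all_algebra.
From mathcomp Require Import all_classical all_reals all_analysis.
Set Implicit Arguments. Unset Strict Implicit. Unset Printing Implicit Defensive.
Import Order.TTheory GRing.Theory Num.Theory.
Import numFieldNormedType.Exports.
Local Open Scope classical_set_scope.
Local Open Scope ring_scope.

Section Defs.
Variable R : realType.

(* Finite (signed) Borel measures on R are represented by their set functions
   [set R -> R]; all measures in the theorem are real-valued. *)

Definition rdirac (x : R) : set R -> R := fun B => \1_B x.

(* Lebesgue integral of a bounded Borel function g against the finite signed
   measure nu, defined as the limit of the integrals of the simple functions
   (k/n) on the level sets {k/n <= g < (k+1)/n}, |k| <= n^2. *)
Definition sint (nu : set R -> R) (g : R -> R) : R :=
  limn (fun n : nat => \sum_(k < (2 * (n * n)).+1)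
    let c := ((k%:R - (n * n)%:R) / n%:R) in
    c * nu [set y | c <= g y < c + n%:R^-1]).

(* (mu * nu)(B) := int int 1_B(x+y) nu(dx) mu(dy) ; the inner integral of an
   indicator is nu {x | x + y \in B}. *)
Definition conv (mu nu : set R -> R) : set R -> R :=
  fun B => sint mu (fun y => nu [set x | B (x + y)]).

Fixpoint convpow (mu : set R -> R) (j : nat) : set R -> R :=
  match j with
  | 0 => rdirac 0
  | j'.+1 => conv mu (convpow mu j')
  end.

Definition piM (eta mu : set R -> R) : set R -> R :=
  fun B => rdirac 0 B - conv eta mu B.

Definition PiM (eta mu : set R -> R) (B : set R) (m : nat) : R :=
  \sum_(l < m.+1) convpow (piM eta mu) l B.

Definition totvar (nu : set R -> R) (A : set R) : \bar R :=
  ereal_sup [set (\sum_(i <oo) (`|nu (F i)|)%:E)%E | F in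
    [set F : nat -> set R | (forall i, measurable (F i)) /\
       trivIset setT F /\ \bigcup_i F i = A]].

Definition zsum (f : int -> R) : R :=
  limn (fun N : nat => \sum_(k < (2 * N).+1) f (k%:Z - N%:Z)).

Fixpoint dconvpow (u : int -> R) (j : nat) : int -> R :=
  match j with
  | 0 => fun z => (z == 0)%:R
  | j'.+1 => fun z => zsum (fun y => u (z - y) * dconvpow u j' y)
  end.

(* gamma{u}(z) := sum_{j=0}^{z} u^{*j}(z)  (empty sum = 0 for z < 0) *)
Definition gammaD (u : int -> R) (z : int) : R :=
  \sum_(j < `|z|%N.+1) if (0 <= z)%R then dconvpow u j z else 0.

End Defs.

From Pilot Require Import Defs.
From HB Require Import structures.
From mathcomp Require Import all_boot all_order all_algebra.
From mathcomp Require Import all_classical all_reals all_analysis.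
From mathcomp Require Import zify ring lra.
Import Order.TTheory GRing.Theory Num.Theory.
Import numFieldNormedType.Exports.
Local Open Scope classical_set_scope.
Local Open Scope ring_scope.

(* The law mu of eps lives on the lattice z0 + t N, with masses p_w at z0 + t w
   and p_0 > 0.  For eta = k delta_{-z0}, the signed measure
   pi = delta_0 - eta * mu is therefore atomic, with mass delta_{w,0} - k p_w at
   t w, and its l-th convolution power has as masses the discrete l-th
   convolution power c^k_l of these weights.  Hence
   Pi{eta}(A, m) = sum_z (sum_{l <= m} c^k_l(z)) 1_A(t z), a finite sum over the
   lattice points of A, which all satisfy z <= m_{t,A}.
   For k = lambda = 1/p_0 the weight at 0 vanishes, so c^k_l(z) = 0 for l > z:
   the inner sums are constant from m = z on, and equal to gamma{u}(z).
   For k = 1 one has sum_l |c^1_l(z)| <= lambda^(z+1), which bounds the total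
   variations, and gamma1 = sum_l c^1_l solves p * gamma1 = delta_0; since
   p_0 > 0 this triangular system has lambda gamma{u} as its only solution.
   As the integral sint is defined through level sets, integrals against
   atomic measures are computed by approximating the integrand uniformly with
   the grid simple functions. *)

Section series.
Context {R : realType}.
Implicit Types (f : nat -> R) (N : nat).

Lemma sumr_ord_trunc {f} {K N : nat} : (forall i, (K <= i)%N -> f i = 0) -> (K <= N)%N ->
  \sum_(i < N) f i = \sum_(i < K) f i.
Proof.
move=> f0 KN; rewrite -!(big_mkord xpredT) (big_cat_nat (leq0n K) KN) /=.
rewrite [X in _ + X]big_nat_cond [X in _ + X]big1 ?addr0 //.
by move=> i /andP[/andP[/f0]].
Qed.

Lemma cvg_series_eventually0 f N : (forall n, (N <= n)%N -> f n = 0) ->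
  series f @ \oo --> \sum_(k < N) f k.
Proof.
move=> f0; apply: cvg_near_cst; near=> n.
by rewrite /series /= big_mkord (sumr_ord_trunc f0); last by near: n; exists N.
Unshelve. all: by end_near. Qed.

Lemma cvg_series_sum K (h : nat -> nat -> R) :
  (forall k, cvgn (series (h k))) ->
  series (fun w => \sum_(k < K) h k w) @ \oo --> \sum_(k < K) limn (series (h k)).
Proof.
move=> hc; have -> : series (fun w => \sum_(k < K) h k w) =
    (fun n => \sum_(k < K) series (h k) n).
  by apply/funext => n; rewrite /series /= exchange_big.
by apply: cvg_big => //; exact: add_continuous.
Qed.

Lemma is_cvg_series_norm_dom {a f : nat -> R} {C : R} : 0 <= C ->
  cvgn (series (fun w => `|a w|)) -> (forall w, `|f w| <= C * `|a w|) ->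
  cvgn (series (fun w => `|f w|)).
Proof.
move=> C0 sa fa; apply: (@series_le_cvg _ _ (fun w => C * `|a w|)) => // w.
- by rewrite mulr_ge0.
- by have -> : (fun w => C * `|a w|) = C *: (fun w => `|a w|) by []; exact: is_cvg_seriesZ.
Qed.

Lemma is_cvg_series_dom {a f : nat -> R} {C : R} : 0 <= C ->
  cvgn (series (fun w => `|a w|)) -> (forall w, `|f w| <= C * `|a w|) ->
  cvgn (series f).
Proof. by move=> C0 sa fa; apply: normed_cvg; exact: is_cvg_series_norm_dom fa. Qed.

Lemma sumr_delta0 (z : nat) f : \sum_(w < z.+1) (w == 0)%:R * f w = f 0%N.
Proof. by rewrite big_ord_recl mul1r big1 ?addr0 // => i _; rewrite mul0r. Qed.

Lemma sum_conv_reindex N (a b h : nat -> R) : (forall v, (N <= v)%N -> h v = 0) ->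
  \sum_(w < N) a w * \sum_(z < N) b z * h (z + w)%N =
  \sum_(v < N) (\sum_(w < v.+1) a w * b (v - w)%N) * h v.
Proof.
move=> hN.
have e1 : forall v : 'I_N, (\sum_(w < v.+1) a w * b (v - w)%N) * h v =
   \sum_(w < N) a w * ((if (w <= v)%N then b (v - w)%N else 0) * h v).
  move=> v; rewrite big_distrl /= (@sumr_ord_trunc
    (fun w => a w * ((if (w <= v)%N then b (v - w)%N else 0) * h v)) v.+1 N).
  - by apply: eq_bigr => w _; have := ltn_ord w; rewrite ltnS => ->; rewrite mulrA.
  - by move=> i vi; rewrite leqNgt vi /= mul0r mulr0.
  - exact: ltn_ord.
rewrite (eq_bigr _ (fun v _ => e1 v)) exchange_big /=.
apply: eq_bigr => w _; rewrite -big_distrr /=; congr (_ * _).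
rewrite (@sumr_ord_trunc (fun z => b z * h (z + w)%N) (N - w) N); last 2 first.
- by move=> i hi; rewrite hN ?mulr0 //; have := ltn_ord w; lia.
- exact: leq_subr.
rewrite -(big_mkord xpredT (fun i => b i * h (i + w)%N)).
rewrite -(big_mkord xpredT (fun i => (if (w <= i)%N then b (i - w)%N else 0) * h i)).
rewrite (big_cat_nat (leq0n w) (ltnW (ltn_ord w))) /=.
rewrite [X in _ = X + _]big_nat_cond [X in _ = X + _]big1 ?add0r; last first.
  by move=> i /andP[/andP[_ iw] _]; rewrite leqNgt iw mul0r.
have := @big_addn R 0 +%R 0 N w xpredT (fun i => (if (w <= i)%N then b (i - w)%N else 0) * h i).
rewrite add0n => ->.
by apply: eq_bigr => i _; rewrite leq_addl addnK.
Qed.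

End series.

Section grid.
Context {R : realType}.

Definition grid (n k : nat) : R := (k%:R - (n * n)%:R) / n%:R.

(* The simple functions whose integrals against [nu] form the sequence whose
   limit is [sint nu]. *)
Definition grid_approx (n : nat) (v : R) : R :=
  \sum_(k < (2 * (n * n)).+1)
    grid n k * ((grid n k <= v) && (v < grid n k + n%:R^-1))%:R.

Lemma grid_binE (n k : nat) (v : R) : (0 < n)%N ->
  (grid n k <= v) && (v < grid n k + n%:R^-1) =
  (Num.floor (n%:R * v) == k%:Z - (n * n)%:Z).
Proof.
move=> n0; have N0 : (0 : R) < n%:R by rewrite ltr0n.
rewrite floor_eq !intrD !intrN -!pmulrn.
have -> : grid n k + n%:R^-1 = (k%:R - (n * n)%:R + 1) / n%:R.
  by rewrite /grid [RHS]mulrDl mul1r.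
by rewrite /grid ler_pdivrMr // ltr_pdivlMr // [v * _]mulrC.
Qed.

Lemma grid_approx_floor (n : nat) (v : R) : (0 < n)%N -> `|v| < n%:R ->
  grid_approx n v = (Num.floor (n%:R * v))%:~R / n%:R.
Proof.
move=> n0 vn; have := vn; rewrite ltr_norml => /andP[vgt vlt].
set f := Num.floor (n%:R * v).
have fge : - (n * n)%:Z <= f by rewrite /f floor_ge_int intrN -pmulrn natrM; nra.
have flt : f < (n * n)%:Z by rewrite /f floor_lt_int -pmulrn natrM; nra.
pose k0 := absz (f + (n * n)%:Z).
have k0E : k0%:Z = f + (n * n)%:Z by rewrite /k0 abszE ger0_norm // -lerBlDr sub0r.
have k0lt : (k0 < (2 * (n * n)).+1)%N by lia.
rewrite /grid_approx (bigD1 (Ordinal k0lt)) //= big1 ?addr0.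
  rewrite grid_binE // -/f k0E addrK eqxx mulr1 /grid; congr (_ / _).
  have : (k0%:Z)%:~R = (f + (n * n)%:Z)%:~R :> R by rewrite k0E.
  by rewrite intrD -!pmulrn => ->; rewrite addrK.
move=> i ne; rewrite grid_binE // -/f.
case: eqP => [fi|]; last by rewrite mulr0.
by move/eqP: ne; case; apply/val_inj => /=; lia.
Qed.

Lemma grid_approx_dist (n : nat) (v : R) : (0 < n)%N -> `|v| < n%:R ->
  `|grid_approx n v - v| <= n%:R^-1.
Proof.
move=> n0 vn; have N0 : (0 : R) < n%:R by rewrite ltr0n.
rewrite grid_approx_floor //.
have /andP[fle flt] := floor_itv (n%:R * v).
move: fle flt; rewrite intrD; set F := (Num.floor _)%:~R => fle flt.
have -> : F / n%:R - v = (F - n%:R * v) * n%:R^-1 by field; rewrite lt0r_neq0.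
rewrite normrM [X in _ * X]ger0_norm; last by rewrite invr_ge0 ltW.
rewrite -[X in _ <= X]mul1r; apply: ler_wpM2r; first by rewrite invr_ge0 ltW.
rewrite ler_norml.
by rewrite (_ : 1%:~R = 1 :> R) // in flt; apply/andP; split; lra.
Qed.

End grid.

Section atomic_integral.
Context {R : realType}.
Implicit Types (h : nat -> R) (g : R -> R).

Lemma cvg_series_delta0 h : series (fun w => (w == 0)%:R * h w) @ \oo --> h 0%N.
Proof.
have := @cvg_series_eventually0 R (fun w => (w == 0)%:R * h w) 1.
by rewrite big_ord1 mul1r; apply; case=> // n _; rewrite mul0r.
Qed.

Lemma indic_setE (P : R -> bool) (z : R) : \1_[set y | P y] z = (P z)%:R :> R.
Proof.
rewrite indicE; case: (boolP (P z)) => h; first by rewrite mem_set.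
by rewrite memNset //; apply/negP.
Qed.

Lemma lim_series_unif {a g : nat -> R} {f : nat -> nat -> R} {B : R} :
  cvgn (series (fun w => `|a w|)) -> (forall w, `|g w| <= B) ->
  (\forall n \near \oo, forall w, `|f n w - g w| <= n%:R^-1) ->
  (fun n => limn (series (fun w => a w * f n w))) @ \oo -->
    limn (series (fun w => a w * g w)).
Proof.
move=> sa gB fg.
have B0 : 0 <= B := le_trans (normr_ge0 _) (gB 0%N).
have sg : cvgn (series (fun w => a w * g w)).
  by apply: (is_cvg_series_dom B0 sa) => w; rewrite normrM mulrC ler_wpM2r.
pose S := limn (series (fun w => `|a w|)).
have S0 : 0 <= S.
  by apply: limr_ge => //; apply: nearW => n; apply: sumr_ge0.
apply/cvgrPdist_le => e e0; near=> n.
have nS : S / e < n%:R by near: n; apply: nbhs_infty_gtr.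
have N0 : (0 : R) < n%:R by apply: le_lt_trans nS; apply: divr_ge0 => //; exact: ltW.
have N1 : (0 : R) <= n%:R^-1 by rewrite invr_ge0 ltW.
have fgn : forall w, `|f n w - g w| <= n%:R^-1 by near: n.
have sd : cvgn (series (fun w => `|a w * (g w - f n w)|)).
  apply: (is_cvg_series_norm_dom N1 sa) => w.
  by rewrite normrM mulrC distrC ler_wpM2r.
have sf : cvgn (series (fun w => a w * f n w)).
  apply: (is_cvg_series_dom (addr_ge0 B0 N1) sa) => w.
  rewrite normrM mulrC ler_wpM2r // -[f n w](subrK (g w)).
  by apply: le_trans (ler_normD _ _) _; rewrite addrC lerD.
have -> : limn (series (fun w => a w * g w)) - limn (series (fun w => a w * f n w)) =
          limn (series (fun w => a w * (g w - f n w))).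
  by rewrite -lim_seriesB //; congr (limn (series _)); apply/funext => w /=; rewrite mulrBr.
apply: le_trans (lim_series_norm sd) _.
have saZ : cvgn (series (n%:R^-1 *: (fun w => `|a w|))) by exact: is_cvg_seriesZ.
apply: (@le_trans _ _ (limn (series (n%:R^-1 *: (fun w => `|a w|))))).
  apply: lim_series_le => // w /=.
  by rewrite normrM mulrC distrC ler_wpM2r.
rewrite lim_seriesZ // -/S; change (n%:R^-1 * S <= e).
by rewrite mulrC ler_pdivrMr // ltW // mulrC -ltr_pdivrMr.
Unshelve. all: by end_near. Qed.

Lemma sint_atomic (nu : set R -> R) g (x a : nat -> R) (B : R) :
  cvgn (series (fun w => `|a w|)) -> (forall y, `|g y| <= B) ->
  (forall c e, nu [set y | c <= g y < c + e] =
     limn (series (fun w => a w * \1_[set y | c <= g y < c + e] (x w)))) ->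
  sint nu g = limn (series (fun w => a w * g (x w))).
Proof.
move=> sa gB nuE.
suff -> : sint nu g = limn (fun n => limn (series (fun w => a w * grid_approx n (g (x w))))).
  apply: cvg_lim => //; apply: (lim_series_unif sa (fun w => gB (x w))).
  near=> n => w; have nB : B < n%:R by near: n; apply: nbhs_infty_gtr.
  apply: grid_approx_dist; last exact: le_lt_trans nB.
  by rewrite -(ltr0n R); apply: le_lt_trans nB; exact: le_trans (gB 0).
rewrite /sint; congr (limn _); apply/funext => n /=.
pose bin k := [set y | grid n k <= g y < grid n k + n%:R^-1].
pose h k w := grid n k * (a w * \1_(bin k) (x w)).
have hcvg : forall k, cvgn (series (fun w => a w * \1_(bin k) (x w))).
  move=> k; apply: (is_cvg_series_dom ler01 sa) => w.
  rewrite normrM mul1r mulrC ler_piMl // indicE.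
  by case: (_ \in _); rewrite ?normr1 ?normr0.
have hE : forall k, grid n k * nu (bin k) = limn (series (h k)).
  by move=> k; rewrite nuE (lim_seriesZ _ (hcvg k)).
under eq_bigr do rewrite hE.
apply/esym/cvg_lim => //.
have -> : (fun w => a w * grid_approx n (g (x w))) = (fun w => \sum_(k < (2 * (n * n)).+1) h k w).
  apply/funext => w; rewrite /grid_approx big_distrr /=; apply: eq_bigr => k _.
  by rewrite /h indic_setE mulrCA.
by apply: cvg_series_sum => k; exact: is_cvg_seriesZ.
Unshelve. all: by end_near. Qed.

Lemma sint_dirac (k x : R) g (B : R) : (forall y, `|g y| <= B) ->
  sint (fun S => k * rdirac x S) g = k * g x.
Proof.
move=> gB; rewrite (@sint_atomic _ _ (fun=> x) (fun w => (w == 0)%:R * k) B) //.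
- apply: cvg_lim => //; rewrite (_ : (fun w => _) = fun w => (w == 0)%:R * (k * g x)).
    exact: cvg_series_delta0.
  by apply/funext => w; rewrite mulrA.
- apply/cvg_ex; exists `|k|; rewrite (_ : (fun w => _) = fun w => (w == 0)%:R * `|k|).
    exact: cvg_series_delta0.
  by apply/funext => w; rewrite normrM normr_nat.
- move=> c e; apply/esym/cvg_lim => //.
  rewrite (_ : (fun w => _) = fun w => (w == 0)%:R * (k * \1_[set y | c <= g y < c + e] x)).
    exact: cvg_series_delta0.
  by apply/funext => w; rewrite mulrA.
Qed.

Lemma sum_indic_trivIset_le1 (F : nat -> set R) (y : R) I : trivIset setT F ->
  \sum_(i < I) \1_(F i) y <= 1 :> R.
Proof.
move=> tF; have [[i0 Fi0]|none] := pselect (exists i : 'I_I, F i y); last first.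
  by rewrite big1 ?ler01 // => i _; rewrite indicE memNset // => Fi; apply: none; exists i.
rewrite (bigD1 i0) //= big1 ?addr0; first by rewrite indicE mem_set.
move=> j ne; rewrite indicE memNset // => Fj; move/eqP: ne; apply; apply: val_inj.
by apply: (tF j i0) => //; exists y.
Qed.

Lemma totvar_le (nu : set R -> R) (A : set R) (C : R) :
  (forall F : nat -> set R, (forall i, measurable (F i)) -> trivIset setT F ->
     \bigcup_i F i = A -> forall I, \sum_(i < I) `|nu (F i)| <= C) ->
  (totvar nu A <= C%:E)%E.
Proof.
move=> h; apply: ge_ereal_sup => _ [F [mF [tF UF]] <-].
apply: lime_le; first exact: is_cvg_nneseries.
by apply: nearW => I; rewrite sumEFin lee_fin big_mkord; exact: h.
Qed.

Lemma zsum_supported (f : int -> R) (Z : nat) : (forall y : int, y < 0 -> f y = 0) ->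
  (forall y : nat, (Z < y)%N -> f y = 0) -> zsum f = \sum_(y < Z.+1) f y.
Proof.
move=> fneg fbig; apply: cvg_lim => //; apply: cvg_near_cst; near=> N.
have ZN : (Z <= N)%N by near: N; exists Z.
rewrite -(big_mkord xpredT (fun k => f (k%:Z - N%:Z))).
rewrite (big_cat_nat (leq0n N) (_ : N <= (2 * N).+1)%N) /=; last by lia.
rewrite big_nat_cond big1 ?add0r; last by move=> i /andP[/andP[_ iN] _]; apply: fneg; lia.
have := @big_addn R 0 +%R 0 (2 * N).+1 N xpredT (fun k => f (k%:Z - N%:Z)).
rewrite add0n => ->; rewrite (_ : ((2 * N).+1 - N)%N = N.+1); last by lia.
under eq_bigr do rewrite PoszD addrK.
by rewrite big_mkord (@sumr_ord_trunc _ (fun y => f y) Z.+1 N.+1).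
Unshelve. all: by end_near. Qed.

End atomic_integral.

Section shift.
Context {R : realType}.

Definition shift (B : set R) (c : R) : set R := [set x | B (x + c)].

Lemma shiftC (B : set R) (a b : R) : shift (shift B a) b = shift (shift B b) a.
Proof. by apply/funext => x; rewrite /shift /= addrAC. Qed.

Lemma indic_shift (B : set R) (c y : R) : \1_(shift B c) y = \1_B (y + c) :> R.
Proof. by []. Qed.

Lemma measurable_shift (B : set R) (c : R) : measurable B -> measurable (shift B c).
Proof.
move=> mB; rewrite -[shift B c]setTI.
apply: (measurable_realfun.continuous_measurable_fun _) => // x.
by apply: continuousD => //; exact: cvg_cst.
Qed.

End shift.

Section lattice_law.
Context {R : realType}.
Variables (mu : set R -> R) (z0 t : R).

Definition lat (w : nat) : R := z0 + t * w%:R.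
Definition mass (w : nat) : R := mu [set lat w].

Hypothesis mu_atomic : forall X, measurable X ->
  series (fun w => mass w * \1_X (lat w)) @ \oo --> mu X.
Hypothesis mu_ge0 : forall X, measurable X -> 0 <= mu X.
Hypothesis mu_setT : mu setT = 1.

Lemma mass_ge0 w : 0 <= mass w.
Proof. by apply: mu_ge0; exact: measurable_set1. Qed.

Lemma cvg_series_mass : series mass @ \oo --> (1 : R).
Proof.
rewrite -mu_setT (_ : series mass = series (fun w => mass w * \1_setT (lat w))).
  exact: mu_atomic.
by congr series; apply/funext => w; rewrite indicT mulr1.
Qed.

Lemma mu_le1 X : measurable X -> mu X <= 1.
Proof.
move=> mX; rewrite -(cvg_lim _ (mu_atomic _ mX)) // -(cvg_lim _ cvg_series_mass) //.
apply: ler_lim; [exact: cvgP (mu_atomic _ mX) | exact: cvgP cvg_series_mass |].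
apply: nearW => n; apply: ler_sum => w _; rewrite -[X in _ <= X]mulr1.
by rewrite ler_wpM2l ?mass_ge0 // indicE; case: (_ \in _); rewrite ?ler01.
Qed.

Lemma mass_le1 w : mass w <= 1.
Proof. by apply: mu_le1; exact: measurable_set1. Qed.

Lemma sum_mass_le1 M : \sum_(w < M) mass w <= 1.
Proof.
have := nondecreasing_cvgn_le (nondecreasing_series (fun n _ _ => mass_ge0 n))
  (cvgP _ cvg_series_mass) M.
by rewrite (cvg_lim _ cvg_series_mass) // /series /= big_mkord.
Qed.

Lemma mass_off_lattice (x : R) : (forall w, lat w != x) -> mu [set x] = 0.
Proof.
move=> xlat; rewrite -(cvg_lim _ (mu_atomic _ (measurable_set1 x))) //.
apply: cvg_lim => //; have := @cvg_series_eventually0 R (fun w => mass w * \1_[set x] (lat w)) 0.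
rewrite big_ord0; apply => n _; rewrite indicE memNset ?mulr0 // => /= latx.
by move/eqP: (xlat n).
Qed.

Lemma mu_lattice_neg (z : int) : 0 < t -> z < 0 -> mu [set z0 + t * z%:~R] = 0.
Proof.
move=> t0 z_neg; apply: mass_off_lattice => w; apply/eqP.
move=> /addrI /(mulfI (lt0r_neq0 t0)) wz.
have /intr_inj wzZ : (w%:Z)%:~R = z%:~R :> R by [].
by move: z_neg; rewrite -wzZ.
Qed.

Definition eta (k : R) : set R -> R := fun B => k * rdirac (- z0) B.

Definition pi_mass (k : R) (w : nat) : R := (w == 0)%:R - k * mass w.

Lemma is_cvg_series_norm_pi_mass k : cvgn (series (fun w => `|pi_mass k w|)).
Proof.
apply: (@series_le_cvg _ _ (fun w => (w == 0)%:R * 1 + `|k| * mass w)).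
- by move=> w; exact: normr_ge0.
- by move=> w; rewrite addr_ge0 ?mulr_ge0 ?mass_ge0.
- move=> w; rewrite /pi_mass mulr1; apply: le_trans (ler_normB _ _) _.
  by rewrite normrM (ger0_norm (mass_ge0 w)) normr_nat.
- have -> : series (fun w => (w == 0)%:R * 1 + `|k| * mass w) =
            (fun n => series (fun w => (w == 0)%:R * 1) n + `|k| * series mass n).
    by apply/funext => n; rewrite /series /= big_split /= big_distrr.
  apply: cvgP; apply: cvgD; first exact: cvg_series_delta0.
  exact: cvgM (cvg_cst _) cvg_series_mass.
Qed.

Lemma conv_eta k L : measurable L -> Defs.conv (eta k) mu L = k * mu (shift L (- z0)).
Proof.
move=> mL; apply: (@sint_dirac _ k (- z0) (fun y => mu (shift L y)) 1) => y.
have mLy := measurable_shift _ y mL.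
by rewrite ger0_norm ?mu_ge0 ?mu_le1.
Qed.

Lemma cvg_series_pi_mass k L : measurable L ->
  series (fun w => pi_mass k w * \1_L (t * w%:R)) @ \oo --> piM (eta k) mu L.
Proof.
move=> mL; rewrite /piM conv_eta //.
have -> : series (fun w => pi_mass k w * \1_L (t * w%:R)) =
  (fun n => series (fun w => (w == 0)%:R * \1_L (t * w%:R)) n
            - k * series (fun w => mass w * \1_(shift L (- z0)) (lat w)) n).
  apply/funext => n; rewrite /series /= big_distrr -sumrB; apply: eq_bigr => w _.
  by rewrite /= indic_shift /lat addrAC subrr add0r /pi_mass mulrBl mulrA.
apply: cvgB.
  by rewrite /rdirac -(mulr0 t); exact: cvg_series_delta0 (fun w => \1_L (t * w%:R)).
apply: cvgM; first exact: cvg_cst.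
by apply: mu_atomic; exact: measurable_shift.
Qed.

(* The [l]-th convolution power of [piM (eta k) mu] at [B], unfolded as an
   iterated series over its atoms [t * w] (see [convpow_piconv]). *)
Fixpoint piconv (k : R) (l : nat) (B : set R) : R :=
  if l is l'.+1 then
    limn (series (fun w => pi_mass k w * piconv k l' (shift B (t * w%:R))))
  else \1_B 0.

Definition norm_pi_mass (k : R) : R := limn (series (fun w => `|pi_mass k w|)).

Lemma norm_pi_mass_ge0 k : 0 <= norm_pi_mass k.
Proof.
apply: limr_ge; first exact: is_cvg_series_norm_pi_mass.
by apply: nearW => n; apply: sumr_ge0.
Qed.

Lemma piconv_bound k l B : `|piconv k l B| <= norm_pi_mass k ^+ l.
Proof.
elim: l B => [|l IH] B /=.
  by rewrite expr0 indicE; case: (_ \in _); rewrite ?normr1 ?normr0.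
have dom w : `|pi_mass k w * piconv k l (shift B (t * w%:R))| <=
             norm_pi_mass k ^+ l * `|pi_mass k w|.
  by rewrite normrM mulrC ler_wpM2r.
have Kl0 := exprn_ge0 l (norm_pi_mass_ge0 k).
have sK := is_cvg_series_norm_pi_mass k.
apply: le_trans (lim_series_norm (is_cvg_series_norm_dom Kl0 sK dom)) _.
have -> : norm_pi_mass k ^+ l.+1 =
    limn (series (norm_pi_mass k ^+ l *: (fun w => `|pi_mass k w|))).
  by rewrite lim_seriesZ // exprSr.
apply: lim_series_le => //.
- exact: is_cvg_series_norm_dom Kl0 sK dom.
- exact: is_cvg_seriesZ.
Qed.

Lemma is_cvg_series_piconv k l B :
  cvgn (series (fun w => pi_mass k w * piconv k l (shift B (t * w%:R)))).
Proof.
apply: (is_cvg_series_dom (exprn_ge0 l (norm_pi_mass_ge0 k)) (is_cvg_series_norm_pi_mass k)).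
by move=> w; rewrite normrM mulrC ler_wpM2r // piconv_bound.
Qed.

Lemma measurable_piconv_shift k l B : measurable B ->
  measurable_fun setT (fun y => piconv k l (shift B y)).
Proof.
elim: l B => [|l IH] B mB /=.
  rewrite (_ : (fun y => _) = \1_B); first exact: measurable_realfun.measurable_indic.
  by apply/funext => y; rewrite indic_shift add0r.
under eq_fun do under eq_fun do rewrite shiftC.
apply: (measurable_realfun.measurable_fun_cvg
  (h := fun m y => series (fun w => pi_mass k w * piconv k l (shift (shift B (t * w%:R)) y)) m)).
  move=> m; apply: measurable_sum => w.
  apply: measurable_realfun.measurable_funM; first exact: measurable_cst.
  by apply: IH; exact: measurable_shift.
move=> y _; have -> : (fun w => pi_mass k w * piconv k l (shift (shift B (t * w%:R)) y)) =
  fun w => pi_mass k w * piconv k l (shift (shift B y) (t * w%:R)).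
  by apply/funext => w; rewrite shiftC.
exact: is_cvg_series_piconv.
Qed.

Lemma convpow_piconv k l B : measurable B -> convpow (piM (eta k) mu) l B = piconv k l B.
Proof.
elim: l B => [|l IH] B mB //=.
rewrite /Defs.conv (_ : (fun y => _) = fun y => piconv k l (shift B y)); last first.
  by apply/funext => y; apply: IH; exact: measurable_shift.
rewrite (sint_atomic _ _ (fun w => t * w%:R) _ _ (is_cvg_series_norm_pi_mass k)
  (fun y => piconv_bound k l (shift B y))) // => c e.
apply/esym/cvg_lim => //; apply: cvg_series_pi_mass.
have -> : [set y | c <= piconv k l (shift B y) < c + e] =
    setT `&` (fun y => piconv k l (shift B y)) @^-1` [set` `[c, (c + e)[].
  by rewrite setTI; apply/funext => y /=; rewrite in_itv.
by apply: measurable_piconv_shift => //; exact: measurable_itv.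
Qed.

Fixpoint dpiconv (k : R) (l z : nat) : R :=
  if l is l'.+1 then \sum_(w < z.+1) pi_mass k w * dpiconv k l' (z - w) else (z == 0)%:R.

Lemma piconv_lattice k l B N : (forall z : nat, B (t * z%:R) -> (z < N)%N) ->
  piconv k l B = \sum_(z < N) dpiconv k l z * \1_B (t * z%:R).
Proof.
elim: l B N => [|l IH] B N BN /=.
  case: N BN => [|N] BN.
    by rewrite big_ord0 indicE memNset // => B0; have := BN 0%N; rewrite mulr0 => /(_ B0).
  by rewrite big_ord_recl /= mul1r mulr0 big1 ?addr0 // => i _; rewrite mul0r.
have shiftN w z : shift B (t * w%:R) (t * z%:R) -> (z + w < N)%N.
  by rewrite /shift /= -mulrDr -natrD => /BN.
have vanish w : (N <= w)%N -> pi_mass k w * piconv k l (shift B (t * w%:R)) = 0.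
  by move=> Nw; rewrite (IH _ 0%N) ?big_ord0 ?mulr0 // => z /shiftN; lia.
rewrite (cvg_lim _ (cvg_series_eventually0 _ _ vanish)) //.
rewrite -(sum_conv_reindex N (pi_mass k) (dpiconv k l) (fun v => \1_B (t * v%:R))); last first.
  by move=> v Nv; rewrite indicE memNset // => /BN; lia.
apply: eq_bigr => w _; congr (_ * _); rewrite (IH _ N); last by move=> z /shiftN; lia.
by apply: eq_bigr => z _; rewrite indic_shift -mulrDr -natrD.
Qed.

Lemma PiM_lattice k B N m : measurable B -> (forall z : nat, B (t * z%:R) -> (z < N)%N) ->
  PiM (eta k) mu B m = \sum_(z < N) (\sum_(l < m.+1) dpiconv k l z) * \1_B (t * z%:R).
Proof.
move=> mB BN; rewrite /PiM.
under eq_bigr => l _ do rewrite (convpow_piconv _ _ _ mB) (piconv_lattice _ _ _ _ BN).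
by rewrite exchange_big /=; apply: eq_bigr => z _; rewrite big_distrl.
Qed.

Hypothesis mass0_gt0 : 0 < mass 0.

Definition lamz0 : R := (mass 0)^-1.

Lemma lamz0_ge1 : 1 <= lamz0.
Proof. by rewrite invf_ge1 // mass_le1. Qed.

Lemma lamz0_mass0 : lamz0 * mass 0 = 1.
Proof. by rewrite mulVf // gt_eqF. Qed.

Lemma norm_pi_mass1_0 : `|pi_mass 1 0| = 1 - mass 0.
Proof. by rewrite /pi_mass mul1r ger0_norm // subr_ge0 mass_le1. Qed.

Lemma norm_pi_mass1_S w : `|pi_mass 1 w.+1| = mass w.+1.
Proof. by rewrite /pi_mass mul1r sub0r normrN ger0_norm // mass_ge0. Qed.

Lemma sum_norm_pi_mass1_le z :
  \sum_(w < z.+1) `|pi_mass 1 w| * lamz0 ^+ (z - w).+1 <= lamz0 ^+ z.+1 - (z == 0)%:R.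
Proof.
have lamz0_ge0 : 0 <= lamz0 := le_trans ler01 lamz0_ge1.
have p0 := mass_ge0 0; have e := lamz0_mass0.
case: z => [|z]; first by rewrite big_ord1 norm_pi_mass1_0 expr1 /=; nra.
rewrite big_ord_recl subn0 norm_pi_mass1_0 /= subr0.
have tail : \sum_(i < z.+1) `|pi_mass 1 (bump 0 i)| * lamz0 ^+ (z.+1 - bump 0 i).+1 <=
    (1 - mass 0) * lamz0 ^+ z.+1.
  apply: (@le_trans _ _ (\sum_(i < z.+1) mass i.+1 * lamz0 ^+ z.+1)).
    apply: ler_sum => i _; rewrite /bump /= add1n norm_pi_mass1_S ler_wpM2l ?mass_ge0 //.
    by apply: ler_weXn2l; [exact: lamz0_ge1 | have := ltn_ord i; lia].
  rewrite -big_distrl ler_wpM2r ?exprn_ge0 //.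
  by have := sum_mass_le1 z.+2; rewrite big_ord_recl /=; lra.
have L1 : 1 <= lamz0 ^+ z.+1 by exact: exprn_ege1 lamz0_ge1.
rewrite [lamz0 ^+ z.+2]exprS; set L := lamz0 ^+ z.+1 in tail L1 *; nra.
Qed.

Lemma sum_norm_dpiconv1_le m z : \sum_(l < m.+1) `|dpiconv 1 l z| <= lamz0 ^+ z.+1.
Proof.
elim: m z => [|m IH] z.
  rewrite big_ord1 /=; apply: le_trans (exprn_ege1 _ lamz0_ge1).
  by case: (z == 0); rewrite ?normr1 ?normr0.
rewrite big_ord_recl /= normr_nat.
have step : \sum_(i < m.+1) `|dpiconv 1 (bump 0 i) z| <=
    \sum_(w < z.+1) `|pi_mass 1 w| * lamz0 ^+ (z - w).+1.
  apply: (@le_trans _ _ (\sum_(i < m.+1) \sum_(w < z.+1) `|pi_mass 1 w| * `|dpiconv 1 i (z - w)|)).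
    apply: ler_sum => i _; apply: le_trans (ler_norm_sum _ _ _) _.
    by apply: ler_sum => w _; rewrite normrM.
  rewrite exchange_big /=; apply: ler_sum => w _.
  by rewrite -big_distrr /= ler_wpM2l // IH.
have := sum_norm_pi_mass1_le z; lra.
Qed.

Lemma is_cvg_series_norm_dpiconv1 z : cvgn (series (fun l => `|dpiconv 1 l z|)).
Proof.
apply: nondecreasing_is_cvgn.
  exact: nondecreasing_series (fun n _ _ => normr_ge0 _).
exists (lamz0 ^+ z.+1) => _ [[|m] _ <-].
  by rewrite /series /= big_geq // exprn_ge0 // (le_trans ler01 lamz0_ge1).
by rewrite /series /= big_mkord; exact: sum_norm_dpiconv1_le.
Qed.

Definition gamma1 z : R := limn (series (fun l => dpiconv 1 l z)).

Lemma cvg_series_dpiconv1 z : series (fun l => dpiconv 1 l z) @ \oo --> gamma1 z.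
Proof. exact: normed_cvg (is_cvg_series_norm_dpiconv1 z). Qed.

Lemma gamma1_rec z : gamma1 z = (z == 0)%:R + \sum_(w < z.+1) pi_mass 1 w * gamma1 (z - w).
Proof.
have shifted : (fun m => series (fun l => dpiconv 1 l z) m.+1) =
    (fun m => (z == 0)%:R + \sum_(w < z.+1) pi_mass 1 w * series (fun l => dpiconv 1 l (z - w)) m).
  apply/funext => m; rewrite /series /= big_nat_recl //=; congr (_ + _).
  by rewrite exchange_big /=; apply: eq_bigr => w _; rewrite big_distrr.
have lhs : (fun m => series (fun l => dpiconv 1 l z) m.+1) @ \oo --> gamma1 z.
  by rewrite (cvg_shiftS (series (fun l => dpiconv 1 l z))); exact: cvg_series_dpiconv1.
have rhs : (fun m => (z == 0)%:R + \sum_(w < z.+1) pi_mass 1 w *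
    series (fun l => dpiconv 1 l (z - w)) m) @ \oo -->
    (z == 0)%:R + \sum_(w < z.+1) pi_mass 1 w * gamma1 (z - w).
  apply: cvgD; first exact: cvg_cst.
  apply: cvg_big => [|w _]; first exact: add_continuous.
  exact: cvgM (cvg_cst _) (cvg_series_dpiconv1 _).
by rewrite shifted in lhs; exact: cvg_unique _ lhs rhs.
Qed.

Lemma mass_conv_gamma1 z : \sum_(w < z.+1) mass w * gamma1 (z - w) = (z == 0)%:R.
Proof.
have := gamma1_rec z.
have -> : \sum_(w < z.+1) pi_mass 1 w * gamma1 (z - w) =
   \sum_(w < z.+1) (w == 0)%:R * gamma1 (z - w) - \sum_(w < z.+1) mass w * gamma1 (z - w).
  by rewrite -sumrB; apply: eq_bigr => w _; rewrite /pi_mass mul1r mulrBl.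
rewrite (sumr_delta0 z (fun w => gamma1 (z - w))) subn0; lra.
Qed.

Lemma pi_mass_lamz0 : pi_mass lamz0 0 = 0.
Proof. by rewrite /pi_mass lamz0_mass0 subrr. Qed.

Lemma dpiconv_lamz0_eq0 l z : (z < l)%N -> dpiconv lamz0 l z = 0.
Proof.
elim: l z => [|l IH] z //= zl; apply: big1 => w _.
have [->|w0] := posnP w; first by rewrite pi_mass_lamz0 mul0r.
by rewrite IH ?mulr0 //; have := ltn_ord w; lia.
Qed.

Definition gamma_lamz0 z : R := \sum_(l < z.+1) dpiconv lamz0 l z.

Lemma sum_dpiconv_lamz0 z M : (z < M)%N -> \sum_(l < M) dpiconv lamz0 l z = gamma_lamz0 z.
Proof. by move=> zM; rewrite (sumr_ord_trunc (fun l => dpiconv_lamz0_eq0 l z) zM). Qed.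

Lemma mass_conv_gamma_lamz0 z :
  \sum_(w < z.+1) mass w * (lamz0 * gamma_lamz0 (z - w)) = (z == 0)%:R.
Proof.
have rec : gamma_lamz0 z = (z == 0)%:R + \sum_(w < z.+1) pi_mass lamz0 w * gamma_lamz0 (z - w).
  rewrite /gamma_lamz0 big_ord_recl /=; congr (_ + _).
  under eq_bigr do rewrite /bump /=.
  rewrite exchange_big /=; apply: eq_bigr => w _; rewrite -big_distrr /=.
  have [->|w0] := posnP w; first by rewrite pi_mass_lamz0 !mul0r.
  by congr (_ * _); apply: sum_dpiconv_lamz0; have := ltn_ord w; lia.
have -> : \sum_(w < z.+1) mass w * (lamz0 * gamma_lamz0 (z - w)) =
   \sum_(w < z.+1) (w == 0)%:R * gamma_lamz0 (z - w) -
   \sum_(w < z.+1) pi_mass lamz0 w * gamma_lamz0 (z - w).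
  by rewrite -sumrB; apply: eq_bigr => w _; rewrite /pi_mass; ring.
by rewrite (sumr_delta0 z (fun w => gamma_lamz0 (z - w))) subn0 {1}rec addrK.
Qed.

Lemma mass_conv_inj (f g : nat -> R) :
  (forall z, \sum_(w < z.+1) mass w * f (z - w)%N = \sum_(w < z.+1) mass w * g (z - w)%N) ->
  f =1 g.
Proof.
move=> fg; elim/ltn_ind => z IH; have := fg z; rewrite !big_ord_recl /= !subn0.
rewrite (eq_bigr (fun i : 'I_z => mass (bump 0 i) * g (z - bump 0 i)%N)); last first.
  by move=> i _; rewrite IH //; have := ltn_ord i; rewrite /bump /= add1n; lia.
by move/addIr/mulfI; apply; exact: lt0r_neq0.
Qed.

Lemma gamma1E z : gamma1 z = lamz0 * gamma_lamz0 z.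
Proof.
by move: z; apply: mass_conv_inj => z; rewrite mass_conv_gamma1 mass_conv_gamma_lamz0.
Qed.

Lemma totvar_PiM1_le A N m : measurable A -> (forall z : nat, A (t * z%:R) -> (z < N)%N) ->
  (totvar (fun B => PiM (eta 1) mu B m) A <= (\sum_(z < N) lamz0 ^+ z.+1)%:E)%E.
Proof.
move=> mA AN; apply: totvar_le => F mF tF UF I.
have FN i z : F i (t * z%:R) -> (z < N)%N by move=> Fz; apply: AN; rewrite -UF; exists i.
apply: (@le_trans _ _ (\sum_(i < I) \sum_(z < N)
    `|\sum_(l < m.+1) dpiconv 1 l z| * \1_(F i) (t * z%:R))).
  apply: ler_sum => i _; rewrite (PiM_lattice _ _ _ _ (mF i) (FN i)).
  apply: le_trans (ler_norm_sum _ _ _) _; apply: ler_sum => z _.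
  by rewrite normrM [X in _ * X]ger0_norm.
rewrite exchange_big /=; apply: ler_sum => z _; rewrite -big_distrr /=.
apply: le_trans (_ : _ <= `|\sum_(l < m.+1) dpiconv 1 l z| * 1) _.
  exact/ler_wpM2l/sum_indic_trivIset_le1.
by rewrite mulr1; apply: le_trans (ler_norm_sum _ _ _) (sum_norm_dpiconv1_le _ _).
Qed.

Lemma cvg_PiM1 A N : measurable A -> (forall z : nat, A (t * z%:R) -> (z <= N)%N) ->
  (fun m => PiM (eta 1) mu A m) @ \oo --> lamz0 * PiM (eta lamz0) mu A N.
Proof.
move=> mA AN.
have -> : (fun m => PiM (eta 1) mu A m) =
    (fun m => \sum_(z < N.+1) series (fun l => dpiconv 1 l z) m.+1 * \1_A (t * z%:R)).
  apply/funext => m; rewrite (PiM_lattice _ _ N.+1 _ mA AN); apply: eq_bigr => z _.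
  by rewrite /series /= big_mkord.
have -> : lamz0 * PiM (eta lamz0) mu A N = \sum_(z < N.+1) gamma1 z * \1_A (t * z%:R).
  rewrite (PiM_lattice _ _ N.+1 _ mA AN) big_distrr; apply: eq_bigr => z _.
  by rewrite /= sum_dpiconv_lamz0 ?gamma1E ?mulrA.
apply: cvg_big => [|z _]; first exact: add_continuous.
apply: cvgM; last exact: cvg_cst.
by rewrite (cvg_shiftS (series (fun l => dpiconv 1 l z))); exact: cvg_series_dpiconv1.
Qed.

Section discrete_resolvent.
Variable u : int -> R.
Hypothesis u_neg : forall z : int, z < 0 -> u z = 0.
Hypothesis u_nat : forall w : nat, u w = pi_mass lamz0 w.

Lemma dconvpow_dpiconv j (z : int) :
  dconvpow u j z = if 0 <= z then dpiconv lamz0 j `|z|%N else 0.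
Proof.
elim: j z => [|j IH] [zz|zz] //=; under eq_fun do rewrite IH.
  rewrite (zsum_supported _ zz); first last.
  - by move=> y zy; rewrite u_neg ?mul0r //; lia.
  - by move=> y y0; rewrite leNgt y0 /= mulr0.
  rewrite (reindex_inj rev_ord_inj) /=; apply: eq_bigr => w _.
  rewrite subzn; last by have := ltn_ord w; lia.
  by rewrite u_nat subSS subKn //; have := ltn_ord w; lia.
rewrite (zsum_supported _ 0%N); first by rewrite big_ord1 /= u_neg ?mul0r.
- by move=> y y0; rewrite leNgt y0 /= mulr0.
- by move=> y zy; rewrite u_neg ?mul0r //; lia.
Qed.

Lemma gammaD_gamma_lamz0 (z : nat) : gammaD u z = gamma_lamz0 z.
Proof. by apply: eq_bigr => j _; rewrite dconvpow_dpiconv. Qed.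

Lemma cvg_sum_gammaD A N : measurable A -> (forall z : nat, A (t * z%:R) -> (z <= N)%N) ->
  (fun n => lamz0 * \sum_(z < n) gammaD u z%:Z * rdirac (t * z%:R) A)
     @ \oo --> lamz0 * PiM (eta lamz0) mu A N.
Proof.
move=> mA AN; apply: cvg_near_cst; near=> n.
have Nn : (N < n)%N by near: n; exists N.+1.
rewrite (PiM_lattice _ _ N.+1 _ mA AN); congr (_ * _).
rewrite (@sumr_ord_trunc _ (fun z => gammaD u z%:Z * rdirac (t * z%:R) A) N.+1 n) //.
  by apply: eq_bigr => z _; rewrite gammaD_gamma_lamz0 sum_dpiconv_lamz0.
by move=> z Nz; rewrite /rdirac indicE memNset ?mulr0 // => /AN; lia.
Unshelve. all: by end_near. Qed.

End discrete_resolvent.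
End lattice_law.

Section lattice_distribution.
Context {R : realType} {d : measure_display} {T : measurableType d}.
Variables (P : probability T R) (eps : {RV P >-> R}) (z0 t : R).
Hypothesis t0 : 0 < t.

Local Notation D := (distribution P eps).
Local Notation S := [set z0 + t * z%:R | z in [set: nat]].

Hypothesis eps_lattice : D S = 1%E.

Lemma distribution_fin X : measurable X -> D X = (fine (D X))%:E.
Proof.
move=> mX; rewrite fineK // ge0_fin_numE ?measure_ge0 //.
apply: (@le_lt_trans _ _ (D setT)); first by apply: le_measure; rewrite ?inE.
by rewrite probability_setT ltry.
Qed.

Lemma distribution_mass0_gt0 :
  (0 < D [set z0])%E -> 0 < mass (fun B => fine (D B)) z0 t 0.
Proof.
move=> D0; rewrite /mass /lat mulr0 addr0; apply: fine_gt0; rewrite D0 /=.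
by apply: le_lt_trans (ltry 1); rewrite -(probability_setT D) le_measure ?inE.
Qed.

Lemma bigcup_lattice : S = \bigcup_(w in setT) [set lat z0 t w].
Proof. by apply/seteqP; split => x [w _ xw]; exists w. Qed.

Lemma measurable_lattice : measurable S.
Proof. by rewrite bigcup_lattice; apply: bigcup_measurable => w _; exact: measurable_set1. Qed.

Lemma distribution_setI_lattice X : measurable X -> D X = D (X `&` S).
Proof.
move=> mX; have mS := measurable_lattice.
have mXSc : measurable (X `&` ~` S) by apply: measurableI => //; exact: measurableC.
have null : D (X `&` ~` S) = 0%E.
  have DSc : D (~` S) = 0%E.
    rewrite probability_setC //; transitivity (1%:E - 1%:E : \bar R)%E; last exact: subee.
    by congr (_ - _)%E; exact: eps_lattice.
  apply/eqP; rewrite eq_le measure_ge0 andbT -DSc.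
  by apply: le_measure; rewrite ?inE //; exact: measurableC.
rewrite -[in LHS](setIT X) -(setUv S) setIUr.
transitivity (D (X `&` S) + D (X `&` ~` S))%E; last by rewrite null adde0.
apply: measureU => //; first exact: measurableI.
by rewrite setIACA setICr setI0.
Qed.

Lemma distribution_atomic X : measurable X ->
  series (fun w => mass (fun B => fine (D B)) z0 t w * \1_X (lat z0 t w)) @ \oo -->
    fine (D X).
Proof.
move=> mX; pose FW w := X `&` [set lat z0 t w].
have mF w : measurable (FW w) by apply: measurableI => //; exact: measurable_set1.
have tF : trivIset setT FW.
  move=> i j _ _ [x [[_ ei] [_ ej]]]; apply/eqP; rewrite -(eqr_nat R).
  by apply/eqP/(mulfI (lt0r_neq0 t0))/(addrI z0); rewrite -[LHS]/(lat z0 t i) -ei ej.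
have UF : \bigcup_w FW w = X `&` S by rewrite bigcup_lattice setI_bigcupr.
have mU : measurable (\bigcup_w FW w) by rewrite UF; exact: measurableI measurable_lattice.
have sD : (fun n => \sum_(0 <= i < n) D (FW i)) @ \oo --> D X.
  by rewrite (distribution_setI_lattice _ mX) -UF; exact: measure_semi_sigma_additive.
rewrite (distribution_fin _ mX) in sD.
have partialE : (fun n => \sum_(0 <= i < n) D (FW i)) =
    (fun n => (series (fun w => mass (fun B => fine (D B)) z0 t w * \1_X (lat z0 t w)) n)%:E).
  apply/funext => n; rewrite /series /= -sumEFin; apply: eq_bigr => w _.
  rewrite /FW setI1 indicE; case: ifP => _; last by rewrite mulr0 measure0.
  by rewrite mulr1 -distribution_fin //; exact: measurable_set1.
by rewrite partialE in sD; exact: fine_cvg sD.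
Qed.

End lattice_distribution.

Theorem theorem3 (R : realType) (d : measure_display) (T : measurableType d)
  (P : probability T R) (eps : {RV P >-> R}) (z0 t : R) (A : set R) :
  0 < t ->
  distribution P eps [set z0 + t * z%:R | z in [set: nat]] = 1%E ->
  (0 < distribution P eps [set z0])%E ->
  measurable A ->
  (exists M : int, forall a : int, A (t * a%:~R) -> a <= M) ->
  let mu : set R -> R := fun B => fine (distribution P eps B) in
  let F : R -> R := fun x => fine (distribution P eps [set x]) in
  let lam : R := (F z0)^-1 in
  let u : int -> R := fun z => (z == 0)%:R - lam * F (z0 + t * z%:~R) in
  (ereal_sup [set totvar (fun B => PiM (rdirac (- z0)) mu B m) A
              | m in [set: nat]] < +oo)%E /\
  (forall m0 : nat, (forall a : int, A (t * a%:~R) -> a <= m0%:Z) ->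
     ((fun m => PiM (rdirac (- z0)) mu A m) @ \oo
        --> lam * PiM (fun B => lam * rdirac (- z0) B) mu A m0) /\
     ((fun n : nat => lam * \sum_(z < n) gammaD u z%:Z * rdirac (t * z%:R) A)
        @ \oo --> lam * PiM (fun B => lam * rdirac (- z0) B) mu A m0)).
Proof.
move=> t0 eps_lattice D0 mA [M AM] mu F lam u.
have mu_atomic := distribution_atomic P eps z0 t t0 eps_lattice.
have mu_ge0 X : measurable X -> 0 <= mu X by move=> _; exact/fine_ge0/measure_ge0.
have mu_setT : mu setT = 1 by rewrite /mu probability_setT.
have mass0 := distribution_mass0_gt0 P eps z0 t D0.
have lamE : lam = lamz0 mu z0 t by rewrite /lam /F /lamz0 /mass /lat mulr0 addr0.
have etaE : (fun B => lam * rdirac (- z0) B) = eta z0 (lamz0 mu z0 t) by rewrite lamE.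
have dirac1 : rdirac (- z0) = eta z0 1 by apply/funext => B; rewrite /eta mul1r.
have u_neg z : z < 0 -> u z = 0.
  move=> z_neg; have F0 : F (z0 + t * z%:~R) = 0 := mu_lattice_neg _ _ _ mu_atomic z t0 z_neg.
  by rewrite /u F0 mulr0 subr0 (negbTE (ltr0_neq0 z_neg)).
have u_nat (w : nat) : u w = pi_mass mu z0 t (lamz0 mu z0 t) w by rewrite /u lamE.
split.
  apply: le_lt_trans (ltry (\sum_(z < (absz M).+1) lamz0 mu z0 t ^+ z.+1)).
  apply: ge_ereal_sup => _ [m _ <-]; rewrite dirac1.
  apply: (totvar_PiM1_le _ _ _ mu_atomic mu_ge0 mu_setT mass0 _ _ _ mA).
  by move=> z Az; have := AM z Az; lia.
move=> m0 Am0; rewrite etaE lamE; split.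
  rewrite dirac1; apply: (cvg_PiM1 _ _ _ mu_atomic mu_ge0 mu_setT mass0 _ _ mA).
  by move=> z Az; have := Am0 z Az; lia.
apply: (cvg_sum_gammaD _ _ _ mu_atomic mu_ge0 mu_setT mass0 u u_neg u_nat _ _ mA).
by move=> z Az; have := Am0 z Az; lia.
Qed.
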